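(* Let $H_1,H_2\in\mathcal O$, let $\lambda_1,\dots,\lambda_N$ be the eigenvalues of $H_2$ with corresponding orthonormal eigenvectors $\psi_1,\dots,\psi_N$, and assume: (i) $(H_1\psi_k,\psi_j)\neq0$ for all $k\neq j$; (ii) $\lambda_k-\lambda_l\neq\lambda_{k'}-\lambda_{l'}$ for all ordered pairs $(k,l)\neq(k',l')$ in $\{1,\dots,N\}^2$. Then: if $\mathrm{Tr}(H_1)=\mathrm{Tr}(H_2)=0$, $\mathcal L(H_1,H_2)$ equals the space of all traceless Hermitian operators on $\mathcal H$; otherwise $\mathcal L(H_1,H_2)=\mathcal O$.
   Context: $\mathcal H=\mathbb C^N$, $N>1$, with inner product $(\psi,\psi')=\sum_k\psi_k\bar\psi'_k$. $\mathcal O$ is the real vector space of Hermitian operators on $\mathcal H$, with bracket $\{A,B\}=i(AB-BA)\in\mathcal O$. $\mathcal L(H_1,H_2)$ is the real linear span of $H_1$, $H_2$ and all iterated brackets of them: $\{H_1,H_2\},\{H_1,\{H_1,H_2\}\},\{H_2,\{H_1,H_2\}\},\dots$ (i.e. the smallest real subspace containing $H_1,H_2$ and closed under $\{\cdot,\cdot\}$). *)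

(* Scalars: an arbitrary numClosedFieldType C (e.g. the
   complex numbers), with conjugation z^* and imaginary unit 'i. *)
From HB Require Import structures.
From mathcomp Require Import all_boot all_order all_algebra.
Set Implicit Arguments. Unset Strict Implicit. Unset Printing Implicit Defensive.
Import Order.TTheory GRing.Theory Num.Theory.
Local Open Scope ring_scope.

Definition inner (C : numClosedFieldType) (N : nat) (u v : 'cV[C]_N) : C :=
  \sum_(k < N) u k ord0 * (v k ord0)^*.

Definition hermitianOp (C : numClosedFieldType) (N : nat) (A : 'M[C]_N) : Prop :=
  forall i j, A j i = (A i j)^*.

Definition bracket (C : numClosedFieldType) (N : nat) (A B : 'M[C]_N) : 'M[C]_N :=
  'i *: (A *m B - B *m A).

(* L(H1,H2): the smallest real subspace containing H1, H2 and closed under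
   the bracket, i.e. the intersection of all such subsets. *)
Definition lie_closure (C : numClosedFieldType) (N : nat) (H1 H2 : 'M[C]_N)
  (X : 'M[C]_N) : Prop :=
  forall S : 'M[C]_N -> Prop,
    S H1 -> S H2 -> S 0 ->
    (forall (a : C) (Y Z : 'M[C]_N), a \is Num.real -> S Y -> S Z -> S (a *: Y + Z)) ->
    (forall Y Z : 'M[C]_N, S Y -> S Z -> S (bracket Y Z)) ->
    S X.

From HB Require Import structures.
From mathcomp Require Import all_boot all_order all_algebra.
From mathcomp Require Import ring.
Set Implicit Arguments. Unset Strict Implicit. Unset Printing Implicit Defensive.
Import Order.TTheory GRing.Theory Num.Theory.
Local Open Scope ring_scope.
Local Open Scope sesquilinear_scope.

(** Conjugating by the eigenbasis of [H2] reduces the problem to [H2 = diag lam]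
    with real [lam].  Bracketing with [diag lam] multiplies the matrix unit
    [E_jm] by ['i (lam j - lam m)], and by (ii) these eigenvalues are pairwise
    distinct for [j != m].  Since [{diag lam, H1}] is a combination of all the
    off-diagonal [E_jm] with nonzero coefficients by (i), each [E_jm] can be
    isolated, first in the complexification of [L(H1, H2)], whose Hermitian
    part is [L(H1, H2)] itself.  Hence [L(H1, H2)] contains every
    [z E_jm + z^* E_mj], their brackets give [E_jj - E_mm], and together these
    span the traceless Hermitian matrices.  Brackets are traceless and
    Hermitian, and a generator with nonzero trace supplies the missing
    direction. *)

Section HermitianMatrices.
Variables (C : numClosedFieldType) (N : nat).
Implicit Types (X Y Z D : 'M[C]_N) (lam : 'I_N -> C).

Lemma bracket_is_linear D : linear (bracket D).
Proof.
move=> a Y Z; rewrite /bracket mulmxDr mulmxDl -scalemxAr -scalemxAl.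
by rewrite opprD addrACA -scalerBr scalerDr !scalerA mulrC.
Qed.

HB.instance Definition _ D :=
  GRing.isLinear.Build C 'M[C]_N 'M[C]_N *:%R (bracket D) (bracket_is_linear D).

Lemma hermitianOpE X : hermitianOp X <-> X ^t* = X.
Proof.
split=> [hX|hX i j]; first by apply/matrixP=> i j; rewrite !mxE (hX i j) conjCK.
by rewrite -{1}hX !mxE.
Qed.

Lemma hermitian_bracket Y Z :
  hermitianOp Y -> hermitianOp Z -> hermitianOp (bracket Y Z).
Proof.
move=> /hermitianOpE hY /hermitianOpE hZ; apply/hermitianOpE.
rewrite /bracket linearZ /= map_mxZ linearB /= map_mxB !trmx_mul !map_mxM.
by rewrite [Y ^t _]hY [Z ^t _]hZ conjCi scaleNr -scalerN opprB.
Qed.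

Lemma hermitian_real_comb a Y Z : a \is Num.real ->
  hermitianOp Y -> hermitianOp Z -> hermitianOp (a *: Y + Z).
Proof.
move=> ra /hermitianOpE hY /hermitianOpE hZ; apply/hermitianOpE.
by rewrite linearD linearZ /= map_mxD map_mxZ hY hZ /= conj_Creal.
Qed.

Lemma hermitian_adj_conj (M X : 'M[C]_N) :
  hermitianOp X -> hermitianOp (M ^t* *m X *m M).
Proof.
move=> /hermitianOpE hX; apply/hermitianOpE.
by rewrite !trmx_mul !map_mxM [X ^t _]hX trmxCK mulmxA.
Qed.

Lemma mxtrace_bracket Y Z : \tr (bracket Y Z) = 0.
Proof. by rewrite /bracket mxtraceZ linearB /= mxtrace_mulC subrr mulr0. Qed.

Lemma mxtrace_hermitian_real X : hermitianOp X -> \tr X \is Num.real.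
Proof. by move=> hX; apply: rpred_sum => i _; rewrite CrealE -hX. Qed.

Lemma hermitian_diag lam :
  (forall j, lam j \is Num.real) -> hermitianOp (diag_mx (\row_i lam i)).
Proof.
move=> lam_real a b; rewrite !mxE rmorphMn /= conj_Creal // eq_sym.
by case: eqP => [->|]; rewrite ?mulr1n ?mulr0n.
Qed.

Lemma bracket_diagE lam Y :
  bracket (diag_mx (\row_i lam i)) Y =
  \matrix_(a, b) ('i * (lam a - lam b) * Y a b).
Proof. by apply/matrixP=> a b; rewrite /bracket mul_diag_mx mul_mx_diag !mxE; ring. Qed.

Lemma bracket_diag lam Y :
  bracket (diag_mx (\row_i lam i)) Y =
  \sum_(p : 'I_N * 'I_N | p.1 != p.2)
     ('i * (lam p.1 - lam p.2) * Y p.1 p.2) *: delta_mx p.1 p.2.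
Proof.
rewrite big_rmcond => [|[a b] /negbNE/eqP /= ->]; last by rewrite subrr mulr0 mul0r scale0r.
rewrite bracket_diagE [LHS]matrix_sum_delta pair_bigA /=.
by apply: eq_bigr => p _; rewrite mxE.
Qed.

Lemma bracket_diag_delta lam j m :
  bracket (diag_mx (\row_i lam i)) (delta_mx j m) =
  ('i * (lam j - lam m)) *: delta_mx j m.
Proof.
rewrite bracket_diagE; apply/matrixP=> a b; rewrite !mxE.
by case: eqP => [->|]; case: eqP => [->|] //=; rewrite !mulr0.
Qed.

Definition herm_delta (z : C) (j m : 'I_N) : 'M[C]_N :=
  z *: delta_mx j m + z^* *: delta_mx m j.

Lemma hermitian_herm_delta z j m : hermitianOp (herm_delta z j m).
Proof.
apply/hermitianOpE; rewrite /herm_delta linearD !linearZ /= map_mxD !map_mxZ /=.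
by rewrite !trmx_delta !map_delta_mx conjCK addrC.
Qed.

Lemma herm_delta_diag z j : herm_delta z j j = (z + z^*) *: delta_mx j j.
Proof. by rewrite /herm_delta scalerDl. Qed.

Lemma sum_herm_delta X :
  hermitianOp X -> \sum_j \sum_m herm_delta (X j m) j m = X *+ 2.
Proof.
move=> hX; rewrite /herm_delta.
under eq_bigr => j _ do rewrite big_split /=.
rewrite big_split /= -matrix_sum_delta exchange_big /= mulr2n; congr (_ + _).
by rewrite [RHS]matrix_sum_delta; apply: eq_bigr => m _; apply: eq_bigr => j _; rewrite -hX.
Qed.

Lemma bracket_herm_delta j m : j != m ->
  bracket (herm_delta 1 j m) (herm_delta 'i j m) =
  2%:R *: (delta_mx j j - delta_mx m m).
Proof.
move=> jm; rewrite /bracket /herm_delta conjC1 conjCi !scale1r.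
rewrite !mulmxDl !mulmxDr -!scalemxAr -!scalemxAl !mul_delta_mx_cond.
rewrite !eqxx (negbTE jm) eq_sym (negbTE jm) !mulr0n !mulr1n.
apply/matrixP=> a b; rewrite !mxE.
set x := ((a == j) && _)%:R; set y := ((a == m) && _)%:R.
transitivity ('i * 'i * (2 * (y - x))); first ring.
by rewrite mulCii; ring.
Qed.

End HermitianMatrices.

Section LieClosure.
Variables (C : numClosedFieldType) (N : nat) (H1 H2 : 'M[C]_N).
Implicit Types (X Y Z : 'M[C]_N).
Local Notation L := (lie_closure H1 H2).

Lemma lie_closure_H1 : L H1. Proof. by move=> S. Qed.
Lemma lie_closure_H2 : L H2. Proof. by move=> S. Qed.
Lemma lie_closure0 : L 0. Proof. by move=> S. Qed.

Lemma lie_closure_comb a Y Z :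
  a \is Num.real -> L Y -> L Z -> L (a *: Y + Z).
Proof.
move=> ra LY LZ S s1 s2 s0 sl sb.
exact: sl ra (LY S s1 s2 s0 sl sb) (LZ S s1 s2 s0 sl sb).
Qed.

Lemma lie_closure_bracket Y Z : L Y -> L Z -> L (bracket Y Z).
Proof.
move=> LY LZ S s1 s2 s0 sl sb.
exact: sb (LY S s1 s2 s0 sl sb) (LZ S s1 s2 s0 sl sb).
Qed.

Lemma lie_closureD Y Z : L Y -> L Z -> L (Y + Z).
Proof. by move=> LY LZ; rewrite -[Y]scale1r; apply: lie_closure_comb; rewrite ?rpred1. Qed.

Lemma lie_closureZ a Y : a \is Num.real -> L Y -> L (a *: Y).
Proof. by move=> ra LY; rewrite -[_ *: _]addr0; apply: lie_closure_comb (lie_closure0). Qed.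

Lemma lie_closureB Y Z : L Y -> L Z -> L (Y - Z).
Proof.
by move=> LY LZ; rewrite addrC -scaleN1r; apply: lie_closure_comb; rewrite ?rpredN ?rpred1.
Qed.

Lemma lie_closure_sum I (r : seq I) (P : pred I) (F : I -> 'M[C]_N) :
  (forall i, P i -> L (F i)) -> L (\sum_(i <- r | P i) F i).
Proof. by move=> LF; apply: (big_ind L lie_closure0 lie_closureD LF). Qed.

Lemma lie_closure_hermitian X :
  hermitianOp H1 -> hermitianOp H2 -> L X -> hermitianOp X.
Proof.
move=> h1 h2 LX; apply: LX => //; [|exact: hermitian_real_comb | exact: hermitian_bracket].
by move=> i j; rewrite !mxE conjC0.
Qed.

Lemma lie_closure_traceless X : \tr H1 = 0 -> \tr H2 = 0 -> L X -> \tr X = 0.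
Proof.
move=> t1 t2 LX; apply: (LX (fun Y => \tr Y = 0)) => //; first exact: mxtrace0.
  by move=> a Y Z _ tY tZ; rewrite mxtraceD mxtraceZ tY tZ mulr0 addr0.
by move=> Y Z _ _; apply: mxtrace_bracket.
Qed.

Lemma lie_closure_hermitian_of_sub_trace E M :
  (forall X, hermitianOp X -> L (X - \tr X *: E)) ->
  L M -> hermitianOp M -> \tr M != 0 -> forall X, hermitianOp X -> L X.
Proof.
move=> LE LM hM trM X hX.
have LtrE : L (\tr M *: E) by rewrite -[_ *: E](subKr M); apply: lie_closureB LM (LE M hM).
have LEE : L E.
  rewrite -[E]scale1r -(mulVf trM) -scalerA.
  by apply: lie_closureZ LtrE; rewrite rpredV mxtrace_hermitian_real.
rewrite -[X](subrK (\tr X *: E)); apply: lie_closureD (LE X hX) _.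
exact: lie_closureZ (mxtrace_hermitian_real hX) LEE.
Qed.

End LieClosure.

Arguments lie_closure_H1 {C N H1 H2}.
Arguments lie_closure_H2 {C N H1 H2}.
Arguments lie_closure0 {C N H1 H2}.

Lemma lie_closure_conj (C : numClosedFieldType) (N : nat) (P Q H1 H2 X : 'M[C]_N) :
  P *m Q = 1%:M -> lie_closure H1 H2 X ->
  lie_closure (Q *m H1 *m P) (Q *m H2 *m P) (Q *m X *m P).
Proof.
move=> PQ LX S s1 s2 s0 sl sb; apply: (LX (fun Y => S (Q *m Y *m P))) => //.
- by rewrite mulmx0 mul0mx.
- by move=> a Y Z ra SY SZ; rewrite mulmxDr mulmxDl -scalemxAr -scalemxAl; apply: sl.
move=> Y Z SY SZ; have := sb _ _ SY SZ; congr S.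
rewrite /bracket -scalemxAr -scalemxAl mulmxBr mulmxBl !mulmxA.
by rewrite -!(mulmxA _ P Q) PQ !mulmx1.
Qed.

Lemma stable_sum_eigenvectors (K : fieldType) (V : lmodType K)
    (P : V -> Prop) (T : {linear V -> V}) (I : eqType) (mu : I -> K) (v : I -> V) :
  P 0 -> (forall c x y, P x -> P y -> P (c *: x + y)) ->
  (forall x, P x -> P (T x)) -> (forall i, T (v i) = mu i *: v i) ->
  forall r : seq I, uniq r -> {in r &, injective mu} ->
  P (\sum_(i <- r) v i) -> forall i, i \in r -> P (v i).
Proof.
move=> P0 Pcomb PT Tv r; elim: r v Tv => [//|i0 r IHr] v Tv /= /andP[i0r r_uniq] mu_inj Psum.
have PD x y : P x -> P y -> P (x + y) by move=> Px Py; rewrite -[x]scale1r; apply: (Pcomb).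
have PB x y : P x -> P y -> P (x - y) by move=> Px Py; rewrite addrC -scaleN1r; apply: (Pcomb).
have Pr i : i \in r -> P (v i).
  move=> ir; have mu_neq : mu i - mu i0 != 0.
    by rewrite subr_eq0; apply: contraNneq i0r => /mu_inj <-; rewrite ?inE ?ir ?eqxx ?orbT.
  rewrite -[v i]addr0 -[v i]scale1r -(mulVf mu_neq) -scalerA; apply: (Pcomb) => //.
  apply: (IHr (fun i => (mu i - mu i0) *: v i)) => //.
  - by move=> k; rewrite linearZ /= Tv !scalerA mulrC.
  - by move=> x y xr yr; apply: mu_inj; rewrite inE ?xr ?yr orbT.
  (* the component along [v i0] is killed by [T - mu i0] *)
  have -> : \sum_(i <- r) (mu i - mu i0) *: v i =
            T (\sum_(i <- i0 :: r) v i) - mu i0 *: \sum_(i <- i0 :: r) v i.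
    rewrite linear_sum big_cons /= Tv scaler_sumr big_cons opprD addrACA subrr add0r -sumrB.
    by apply: eq_bigr => k _; rewrite Tv scalerBl.
  by apply: PB; [apply: PT | rewrite -[_ *: _]addr0; apply: (Pcomb)].
move=> i; rewrite inE => /predU1P[->|]; last exact: Pr.
have -> : v i0 = \sum_(i <- i0 :: r) v i - \sum_(i <- r) v i by rewrite big_cons addrK.
by apply: PB; rewrite // big_seq; apply: big_ind.
Qed.

Section Complexification.
Variables (C : numClosedFieldType) (N : nat) (L : 'M[C]_N -> Prop).
Hypotheses (L0 : L 0)
  (Lcomb : forall a Y Z, a \is Num.real -> L Y -> L Z -> L (a *: Y + Z)).

Definition complexified (Y : 'M[C]_N) :=
  exists Y1 Y2, [/\ L Y1, L Y2 & Y = Y1 + 'i *: Y2].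

Lemma complexified_of Y : L Y -> complexified Y.
Proof. by move=> LY; exists Y, 0; rewrite scaler0 addr0. Qed.

Lemma complexified_comb c Y Z :
  complexified Y -> complexified Z -> complexified (c *: Y + Z).
Proof.
move=> [Y1 [Y2 [LY1 LY2 ->]]] [Z1 [Z2 [LZ1 LZ2 ->]]].
have Ra : 'Re c \is Num.real by apply: Creal_Re.
have Rb : 'Im c \is Num.real by apply: Creal_Im.
exists ('Re c *: Y1 + (- 'Im c *: Y2 + Z1)), ('Im c *: Y1 + ('Re c *: Y2 + Z2)).
split; first by do 2 apply: (Lcomb) => //; rewrite rpredN.
- by do 2 apply: (Lcomb) => //.
apply/matrixP=> x y; rewrite {1}[c]Crect !mxE.
(* [ring] does not know ['i * 'i = -1]: add the vanishing [('i * 'i + 1) * 'Im c * Y2 x y]. *)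
rewrite -[RHS]addr0 -(mul0r ('Im c * Y2 x y)) -(addNr 1) -mulCii; ring.
Qed.

Lemma complexified_bracket D Y :
  (forall Z, L Z -> L (bracket D Z)) -> complexified Y -> complexified (bracket D Y).
Proof.
move=> LD [Y1 [Y2 [LY1 LY2 ->]]]; exists (bracket D Y1), (bracket D Y2).
by split; [exact: LD | exact: LD | rewrite linearD linearZ].
Qed.

Lemma complexified_hermitian Y : (forall Z, L Z -> hermitianOp Z) ->
  complexified Y -> hermitianOp Y -> L Y.
Proof.
move=> Lherm [Y1 [Y2 [LY1 LY2 ->]]] /hermitianOpE.
have /hermitianOpE hY1 := Lherm _ LY1; have /hermitianOpE hY2 := Lherm _ LY2.
rewrite linearD linearZ /= map_mxD map_mxZ [Y1 ^t _]hY1 [Y2 ^t _]hY2 /= conjCi.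
rewrite scaleNr => /addrI /eqP; rewrite eq_sym -subr_eq0 opprK -mulr2n -scaler_nat.
rewrite scalerA scaler_eq0 mulf_eq0 pnatr_eq0 (negbTE (neq0Ci C)) /= => /eqP ->.
by rewrite scaler0 addr0.
Qed.

End Complexification.

Section DiagonalPair.
Variables (C : numClosedFieldType) (N : nat) (A : 'M[C]_N) (lam : 'I_N -> C).
Hypotheses (hermA : hermitianOp A) (offdiagA : forall j m, j != m -> A j m != 0)
  (lam_real : forall j, lam j \is Num.real)
  (lam_gap : forall k l k' l', k != l -> k' != l' -> (k, l) != (k', l') ->
     lam k - lam l != lam k' - lam l').
Let D := diag_mx (\row_i lam i).
Local Notation L := (lie_closure A D).

Let hermD : hermitianOp D. Proof. exact: hermitian_diag. Qed.

Let Lcomb : forall a Y Z, a \is Num.real -> L Y -> L Z -> L (a *: Y + Z).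
Proof. exact: lie_closure_comb. Qed.

Lemma offdiag_complexified j m : j != m -> complexified L (delta_mx j m).
Proof.
have cL0 : complexified L 0 by apply: complexified_of; apply: lie_closure0.
have cL_bracket Y : complexified L Y -> complexified L (bracket D Y).
  by apply: complexified_bracket => Z; apply: lie_closure_bracket lie_closure_H2.
pose mu (p : 'I_N * 'I_N) := 'i * (lam p.1 - lam p.2).
pose v p := (mu p * A p.1 p.2) *: (delta_mx p.1 p.2 : 'M[C]_N).
pose r := [seq p <- index_enum {: 'I_N * 'I_N} | p.1 != p.2].
have mu_inj : {in r &, injective mu}.
  move=> [k l] [k' l']; rewrite !mem_filter /= => /andP[kl _] /andP[k'l' _].
  move=> /(mulfI (neq0Ci C)) /eqP; apply: contraTeq => ne; exact: lam_gap.
have cL_v : {in r, forall p, complexified L (v p)}.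
  apply: (stable_sum_eigenvectors (T := bracket D) (mu := mu) cL0 (complexified_comb Lcomb) cL_bracket).
  - by move=> p; rewrite linearZ /= /D bracket_diag_delta !scalerA mulrC.
  - exact/filter_uniq/index_enum_uniq.
  - exact: mu_inj.
  rewrite big_filter -bracket_diag; apply/cL_bracket/complexified_of.
  - exact: lie_closure0.
  - exact: lie_closure_H1.
move=> jm; have /cL_v : (j, m) \in r by rewrite mem_filter /= jm mem_index_enum.
have mu_neq0 : mu (j, m) != 0.
  have mj : m != j by rewrite eq_sym.
  have := lam_gap jm mj; rewrite xpair_eqE (negbTE jm) => /(_ isT) gap_jm.
  rewrite /mu mulf_neq0 ?neq0Ci //=; apply: contraNneq gap_jm => e.
  by rewrite e -opprB e oppr0.
move=> cLv; have := complexified_comb Lcomb ((mu (j, m) * A j m)^-1) cLv cL0.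
by rewrite addr0 scalerA mulVf ?scale1r // mulf_neq0 ?offdiagA.
Qed.

Lemma offdiag_lie_closure z j m : j != m -> L (herm_delta z j m).
Proof.
move=> jm; apply: complexified_hermitian (hermitian_herm_delta _ _ _).
  by move=> Z; apply: lie_closure_hermitian.
have cL0 : complexified L 0 by apply: complexified_of; apply: lie_closure0.
rewrite /herm_delta -[_ *: delta_mx m j]addr0.
have mj : m != j by rewrite eq_sym.
apply: (complexified_comb Lcomb z (offdiag_complexified jm)).
exact: (complexified_comb Lcomb _ (offdiag_complexified mj) cL0).
Qed.

Lemma diag_lie_closure j m : L (delta_mx j j - delta_mx m m).
Proof.
have [->|jm] := eqVneq j m; first by rewrite subrr; apply: lie_closure0.
have := lie_closure_bracket (offdiag_lie_closure 1 jm) (offdiag_lie_closure 'i jm).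
rewrite bracket_herm_delta // => L2.
rewrite -[_ - _]scale1r -(@mulVf _ 2%:R) ?pnatr_eq0 // -scalerA.
by apply: lie_closureZ L2; rewrite rpredV rpred_nat.
Qed.

Lemma lie_closure_sub_trace i0 X :
  hermitianOp X -> L (X - \tr X *: delta_mx i0 i0).
Proof.
move=> hX; set E := delta_mx i0 i0.
have re_diag j : X j j + (X j j)^* \is Num.real.
  by rewrite CrealE rmorphD /= conjCK addrC.
have decomp : (X - \tr X *: E) *+ 2 = \sum_j
    (\sum_(m | m != j) herm_delta (X j m) j m +
     (X j j + (X j j)^*) *: (delta_mx j j - E)).
  rewrite mulrnBl scalerMnl -sum_herm_delta // mulr2n /mxtrace.
  rewrite -big_split /= scaler_suml -sumrB; apply: eq_bigr => j _.
  by rewrite (bigD1 j) //= herm_delta_diag -(hX j j) scalerBr addrCA addrA.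
have -> : X - \tr X *: E = 2%:R^-1 *: ((X - \tr X *: E) *+ 2).
  by rewrite -scaler_nat scalerA mulVf ?pnatr_eq0 ?scale1r.
rewrite decomp; apply: lie_closureZ; first by rewrite rpredV rpred_nat.
apply: lie_closure_sum => j _; apply: lie_closureD.
  by apply: lie_closure_sum => m mj; apply: offdiag_lie_closure; rewrite eq_sym.
by apply: lie_closureZ (re_diag j) (diag_lie_closure j i0).
Qed.

End DiagonalPair.

Section Eigenbasis.
Variables (C : numClosedFieldType) (N : nat) (psi : 'I_N -> 'cV[C]_N).

Definition basis_mx : 'M[C]_N := \matrix_(i, k) psi k i ord0.

Lemma basis_mx_adj_conjE X j k :
  (basis_mx ^t* *m X *m basis_mx) j k = inner (X *m psi k) (psi j).
Proof.
rewrite -mulmxA mxE /inner; apply: eq_bigr => i _.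
by rewrite !mxE mulrC; congr (_ * _); apply: eq_bigr => l _; rewrite mxE.
Qed.

Hypothesis psi_orthonormal : forall k j, inner (psi k) (psi j) = (k == j)%:R.

Lemma basis_mx_adjK : basis_mx ^t* *m basis_mx = 1%:M.
Proof.
apply/matrixP=> j k; have := basis_mx_adj_conjE 1%:M j k.
by rewrite mulmx1 mul1mx => ->; rewrite psi_orthonormal mxE eq_sym.
Qed.

Lemma basis_mx_eigen_diag H lam : (forall k, H *m psi k = lam k *: psi k) ->
  basis_mx ^t* *m H *m basis_mx = diag_mx (\row_k lam k).
Proof.
move=> eig; apply/matrixP=> j k; rewrite basis_mx_adj_conjE eig /inner !mxE.
under eq_bigr => i _ do rewrite mxE -mulrA.
rewrite -mulr_sumr -[\sum_i _]/(inner (psi k) (psi j)) psi_orthonormal mulr_natr.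
by have [->|jk] := eqVneq j k; rewrite ?eqxx // eq_sym (negbTE jk).
Qed.

Lemma eigenbasis_lie_closure_sub_trace (H1 H2 : 'M[C]_N) (lam : 'I_N -> C) (i0 : 'I_N) :
  hermitianOp H1 -> hermitianOp H2 -> (forall k, H2 *m psi k = lam k *: psi k) ->
  (forall k j, k != j -> inner (H1 *m psi k) (psi j) != 0) ->
  (forall k l k' l', k != l -> k' != l' -> (k, l) != (k', l') ->
     lam k - lam l != lam k' - lam l') ->
  exists E, forall X, hermitianOp X -> lie_closure H1 H2 (X - \tr X *: E).
Proof.
move=> h1 h2 eig offdiag gap; set U := basis_mx.
have UK : U ^t* *m U = 1%:M := basis_mx_adjK.
have conjK Y : U *m (U ^t* *m Y *m U) *m U ^t* = Y.
  by rewrite !mulmxA (mulmx1C UK) mul1mx -mulmxA (mulmx1C UK) mulmx1.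
have D2 : U ^t* *m H2 *m U = diag_mx (\row_k lam k) := basis_mx_eigen_diag eig.
have lam_real j : lam j \is Num.real.
  have := hermitian_adj_conj U h2 j j; rewrite D2 !mxE eqxx mulr1n => e.
  by rewrite CrealE -e.
have offdiag' j m : j != m -> (U ^t* *m H1 *m U) j m != 0.
  by move=> jm; rewrite basis_mx_adj_conjE offdiag // eq_sym.
exists (U *m delta_mx i0 i0 *m U ^t*) => X hX.
have := lie_closure_sub_trace (hermitian_adj_conj U h1) offdiag' lam_real gap i0
          (hermitian_adj_conj U hX).
move/(lie_closure_conj UK); rewrite -D2 !conjK mulmxBr mulmxBl conjK.
by rewrite -scalemxAr -scalemxAl mxtrace_mulC mulmxA (mulmx1C UK) mul1mx.
Qed.

End Eigenbasis.

Unset Implicit Arguments.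
Theorem mainTheorem5 (C : numClosedFieldType) (N : nat) (H1 H2 : 'M[C]_N)
  (lambda : 'I_N -> C) (psi : 'I_N -> 'cV[C]_N) :
  (1 < N)%N ->
  hermitianOp H1 -> hermitianOp H2 ->
  (forall k j, inner (psi k) (psi j) = (k == j)%:R) ->
  (forall k, H2 *m psi k = lambda k *: psi k) ->
  (forall k j, k != j -> inner (H1 *m psi k) (psi j) != 0) ->
  (forall k l k' l', k != l -> k' != l' -> (k, l) != (k', l') ->
     lambda k - lambda l != lambda k' - lambda l') ->
  ((\tr H1 = 0 /\ \tr H2 = 0) ->
     forall X : 'M[C]_N, lie_closure H1 H2 X <-> (hermitianOp X /\ \tr X = 0)) /\
  (~ (\tr H1 = 0 /\ \tr H2 = 0) ->
     forall X : 'M[C]_N, lie_closure H1 H2 X <-> hermitianOp X).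
Proof.
move=> N_gt1 h1 h2 orth eig offdiag gap.
have [E LE] := eigenbasis_lie_closure_sub_trace orth (Ordinal (ltnW N_gt1)) h1 h2 eig offdiag gap.
split=> [[t1 t2] X | tr_neq0 X]; split.
- by move=> LX; split; [exact: lie_closure_hermitian LX | exact: lie_closure_traceless LX].
- by move=> [hX trX]; have := LE X hX; rewrite trX scale0r subr0.
- exact: lie_closure_hermitian.
move=> hX; have [t1|t1] := eqVneq (\tr H1) 0.
  have [t2|t2] := eqVneq (\tr H2) 0; first by case: tr_neq0.
  exact: (lie_closure_hermitian_of_sub_trace LE lie_closure_H2 h2 t2 hX).
exact: (lie_closure_hermitian_of_sub_trace LE lie_closure_H1 h1 t1 hX).
Qed.
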